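(* Let $w\ge 2$, $h\ge 3$ and $G=P_w(U)\sqcap C_h$. (1) If $U=\{1\}$ or $U=\{w\}$, then $Z(G)\le\lceil h/2\rceil$. (2) If $U=\{i\}$ with $1<i<w$, then $Z(G)\le h$.
   Context: All graphs are finite, simple and undirected. Zero forcing: given a graph $G$ and a set $S\subseteq V(G)$ of initially filled vertices, the color change rule says that if a filled vertex $v$ has exactly one unfilled neighbor $u$, then $v$ forces $u$ to become filled. $S$ is a zero forcing set if repeatedly applying this rule eventually fills every vertex of $G$. The zero forcing number $Z(G)$ is the minimum cardinality of a zero forcing set of $G$. The path $P_n$ has vertex set $\{1,\dots,n\}$ and edges $\{k,k+1\}$ for $1\le k\le n-1$; the cycle $C_n$ ($n\ge3$) has vertex set $\{1,\dots,n\}$ and edges $\{k,k+1\}$ for $1\le k\le n-1$ together with $\{n,1\}$. Generalized hierarchical product: for graphs $W,H$ and $U\subseteq V(W)$ (the root set), $W(U)\sqcap H$ is the graph with vertex set $V(W)\times V(H)$ in which $(x_1,y_1)$ and $(x_2,y_2)$ are adjacent iff either ($x_1=x_2\in U$ and $y_1y_2\in E(H)$) or ($y_1=y_2$ and $x_1x_2\in E(W)$). *)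

From mathcomp Require Import all_boot.
Set Implicit Arguments. Unset Strict Implicit. Unset Printing Implicit Defensive.

Definition force_step (T : finType) (e : rel T) (S : {set T}) : {set T} :=
  S :|: [set u | [exists v in S,
           [&& e v u, u \notin S &
               [forall x, (e v x && (x \notin S)) ==> (x == u)]]]].

(* Result of applying the colour change rule until no further change
   (#|T| rounds suffice, since each effective round fills a new vertex). *)
Definition derived_set (T : finType) (e : rel T) (S : {set T}) : {set T} :=
  iter #|T| (force_step e) S.

Definition zero_forcing_set (T : finType) (e : rel T) (S : {set T}) : bool :=
  derived_set e S == [set: T].

(* Zero forcing number: minimum cardinality of a zero forcing set
   ([set: T] is always one, so #|T| is a valid default). *)
Definition Z (T : finType) (e : rel T) : nat :=
  \big[minn/#|T|]_(S : {set T} | zero_forcing_set e S) #|S|.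

(* Path P_w on vertices 1..w, represented by 'I_w (vertex k <-> ordinal k-1). *)
Definition path_rel (w : nat) : rel 'I_w :=
  fun a b => (a.+1 == b :> nat) || (b.+1 == a :> nat).

(* Cycle C_h on vertices 1..h, represented by 'I_h (vertex k <-> ordinal k-1). *)
Definition cycle_rel (h : nat) : rel 'I_h :=
  fun a b => (a.+1 %% h == b) || (b.+1 %% h == a).

Definition hier_rel (T1 T2 : finType) (eW : rel T1) (U : {set T1}) (eH : rel T2)
  : rel (T1 * T2) :=
  fun p q => ((p.1 == q.1) && (p.1 \in U) && eH p.2 q.2)
          || ((p.2 == q.2) && eW p.1 q.1).

(* Root set {i} of P_w, with i given in 1..w. *)
Definition root1 (w i : nat) : {set 'I_w} := [set x : 'I_w | x.+1 == i].

From mathcomp Require Import all_boot zify.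

(* A vertex of P_w(U) ⊓ H outside the root layer has only its two path
   neighbours, so filled vertices push along each copy of the path.  Hence a
   full end layer fills every layer in turn, which gives Z <= |V(H)|.  When the
   root is an end of the path, fill instead the far end of the fibres over
   {0} ∪ {odd y < h - 1}: these fibres fill completely, and in the root copy of
   C_h every vertex of them then has all its non-cycle neighbours filled, so
   starting from the filled pair 0, 1 the cycle fills by alternate forces.
   The remaining layers then fill one after another away from the root. *)

Lemma Z_le_card (T : finType) (e : rel T) (S : {set T}) :
  zero_forcing_set e S -> Z e <= #|S|.
Proof.
move=> zfS; rewrite /Z.
have : S \in index_enum {set T} by rewrite mem_index_enum.
elim: (index_enum _) => [//|A r IHr]; rewrite inE big_cons.
case: (eqVneq S A) => [<- _|_ /= /IHr IHS]; first by rewrite zfS geq_minl.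
by case: ifP => // _; apply: leq_trans (geq_minr _ _) IHS.
Qed.

Lemma extensive_iter_fixed (T : finType) (f : {set T} -> {set T}) (S : {set T}) :
  (forall A : {set T}, A \subset f A) -> f (iter #|T| f S) = iter #|T| f S.
Proof.
move=> f_ext.
have grow (A : {set T}) : f A != A -> #|A| < #|f A|.
  by move=> neq; apply: proper_card; rewrite properEneq eq_sym neq f_ext.
have inv m : f (iter m f S) = iter m f S \/ m <= #|iter m f S|.
  elim: m => [|m [fixm|IHm]]; [by right | by left; rewrite /= fixm |].
  case: (eqVneq (f (iter m f S)) (iter m f S)) => [fixm|/grow].
    by left; rewrite /= fixm.
  by right; apply: leq_ltn_trans IHm _.
case: (inv #|T|) => // le_T; apply/eqP; apply: contraT => /grow.
by rewrite ltnNge (leq_trans (max_card _) le_T).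
Qed.

Definition forcing_closed {T : finType} (e : rel T) (C : {set T}) :=
  forall v u, v \in C -> e v u -> (forall x, e v x -> x != u -> x \in C) -> u \in C.

Lemma zero_forcing_set_from_closed (T : finType) (e : rel T) (S : {set T}) :
  (forall C : {set T}, S \subset C -> forcing_closed e C -> forall x, x \in C) ->
  zero_forcing_set e S.
Proof.
move=> allC; apply/eqP/setP => p; rewrite inE; apply: allC.
  rewrite /derived_set; elim: #|T| => [|m IHm] /=; first exact: subxx.
  exact: subset_trans IHm (subsetUl _ _).
have fixD : force_step e (derived_set e S) = derived_set e S.
  by apply: extensive_iter_fixed => A; apply: subsetUl.
move=> v u vD evu others; rewrite -fixD inE.
have [//|uD] := boolP (u \in derived_set e S); rewrite inE.
apply/existsP; exists v; rewrite vD evu uD /=.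
apply/forallP => x; apply/implyP => /andP[evx xD].
by apply: contraR xD => /(others x evx) ->.
Qed.

Section HierarchicalPathForcing.

Context {n : nat} {T : finType} {eH : rel T} {U : {set 'I_n.+1}}.
Let G := hier_rel (@path_rel n.+1) U eH.
Context {C : {set 'I_n.+1 * T}}.
Hypothesis closedC : forcing_closed G C.

Lemma hier_root_force r y y' :
  r \in U -> (forall x, (x, y) \in C) -> eH y y' ->
  (forall z, eH y z -> z != y' -> (r, z) \in C) -> (r, y') \in C.
Proof.
move=> rU fiber yy' others; apply: (closedC (r, y) (r, y') (fiber r)).
  by rewrite /G /hier_rel /= eqxx rU yy'.
move=> [x z] /orP[/andP[/andP[/eqP/= <- _] yz]|/andP[/eqP/= <- _]] neq.
  by apply: others => //; apply: contra_neq neq => ->.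
exact: fiber.
Qed.

(* The layers are filled in the order sigma 0, sigma 1, ..., where sigma is an
   automorphism of the path (the identity or the reversal), and Y is a set of
   fibres closed under the H-edges of every root layer met before the last. *)
Context {sigma : 'I_n.+1 -> 'I_n.+1} {Y : {set T}}.
Hypotheses (sigma_bij : bijective sigma) (sigma_mono : {mono sigma : a b / path_rel a b}).
Hypothesis Y_closed :
  forall (x : 'I_n.+1) y y', x < n -> sigma x \in U -> y \in Y -> eH y y' -> y' \in Y.

Lemma hier_path_sweep_step (x x1 : 'I_n.+1) : x1 = x.+1 :> nat ->
  (forall x' : 'I_n.+1, x' <= x -> forall y, y \in Y -> (sigma x', y) \in C) ->
  forall y, y \in Y -> (sigma x1, y) \in C.
Proof.
move=> x1E filled y Yy; have lt_xn : x < n by have := ltn_ord x1; lia.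
apply: (closedC _ _ (filled x (leqnn x) y Yy)).
  by rewrite /G /hier_rel /= eqxx sigma_mono /path_rel x1E eqxx orbT.
have [sigma' _ sigma'K] := sigma_bij.
move=> [b z] /orP[/andP[/andP[/eqP/= <- xU] yz]|/andP[/eqP/= <- pb]] neq.
  exact: filled x (leqnn x) z (Y_closed _ _ _ lt_xn xU Yy yz).
rewrite -[b]sigma'K in pb neq *; rewrite sigma_mono /path_rel /= in pb.
case/orP: pb => [/eqP eq_b|/eqP eq_x]; last by apply: filled => //; rewrite -eq_x.
by move: neq; rewrite (_ : sigma' b = x1) ?eqxx //; apply: val_inj; rewrite /= -eq_b.
Qed.

Lemma hier_path_sweep :
  (forall y, y \in Y -> (sigma ord0, y) \in C) -> forall x y, y \in Y -> (x, y) \in C.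
Proof.
move=> base x; have [sigma' _ sigma'K] := sigma_bij; rewrite -[x]sigma'K.
suff filled m (x' : 'I_n.+1) : x' <= m -> forall y, y \in Y -> (sigma x', y) \in C.
  exact: filled (leqnn _).
elim: m x' => [|m IHm] x' le_x'm.
  by rewrite (_ : x' = ord0) //; apply: val_inj => /=; lia.
case: (leqP x' m) => [|lt_mx']; first exact: IHm.
have lt_mn : m < n.+1 by have := ltn_ord x'; lia.
apply: (@hier_path_sweep_step (inord m)) => [|x'']; rewrite inordK //; first lia.
exact: IHm.
Qed.

End HierarchicalPathForcing.

Lemma cycle_relP k (a b : 'I_k.+1) :
  reflect (b = a.+1 :> nat \/ a = b.+1 :> nat \/
           a = k :> nat /\ b = 0 :> nat \/ b = k :> nat /\ a = 0 :> nat)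
          (cycle_rel a b).
Proof.
have succ (c : 'I_k.+1) : c.+1 %% k.+1 = if c == k :> nat then 0 else c.+1.
  have := ltn_ord c; case: eqP => [->|ne_ck] lt_ck; first exact: modnn.
  by apply: modn_small; lia.
rewrite /cycle_rel !succ; have := ltn_ord a; have := ltn_ord b.
case: (val a =P k); case: (val b =P k) => /= *; apply: (iffP idP); lia.
Qed.

Definition alternate_vertices k : {set 'I_k.+1} :=
  [set y : 'I_k.+1 | (y == 0 :> nat) || odd y && (y < k)].

Lemma card_alternate_vertices k : #|alternate_vertices k| <= k./2.+1.
Proof.
pose f (y : 'I_k.+1) : 'I_k./2.+1 := inord (uphalf y).
rewrite -(@card_in_imset _ _ f).
  by apply: leq_trans (max_card _) _; rewrite card_ord.
have half_eq (y : nat) : y = odd y + y./2 * 2 /\ uphalf y = odd y + y./2.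
  by rewrite uphalf_half muln2 odd_double_half.
move=> y1 y2; rewrite !inE => Y1 Y2 /(congr1 val) /=.
rewrite !inordK; [move=> ?; apply: val_inj | |];
  have := half_eq y1; have := half_eq y2; have := half_eq k;
  case: (odd y1) Y1; case: (odd y2) Y2; case: (odd k) => /=; lia.
Qed.

Lemma alternate_vertices_force k (D : {set 'I_k.+1}) : 2 <= k ->
  alternate_vertices k \subset D ->
  (forall y y', y \in alternate_vertices k -> cycle_rel y y' ->
     (forall z, cycle_rel y z -> z != y' -> z \in D) -> y' \in D) ->
  forall y, y \in D.
Proof.
move=> le2k YD force y.
have inD (z : 'I_k.+1) : (z == 0 :> nat) || odd z && (z < k) -> z \in D.
  by move=> Yz; apply: (subsetP YD); rewrite inE.
have neq_val (z z' : 'I_k.+1) : z != z' -> z <> z' :> nat.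
  by move=> neq /val_inj eq_zz'; rewrite eq_zz' eqxx in neq.
suff Dm m (y' : 'I_k.+1) : y' = m :> nat -> y' \in D by apply: (Dm y).
elim/ltn_ind: m y' {y} => m IHm y ym.
have [Yy|notYy] := boolP ((y == 0 :> nat) || odd y && (y < k)); first exact: inD.
have ltyk := ltn_ord y; case/boolP: (odd y) => [odd_y|even_y].
  have eq_yk : y = k :> nat by move: notYy; rewrite odd_y /=; lia.
  apply: (force ord0); first by rewrite inE eqxx.
    by apply/cycle_relP => /=; lia.
  move=> z /cycle_relP z_nbr /neq_val neq_zy; apply: inD; have := ltn_ord z.
  have z1 : z = 1 :> nat by move: z_nbr => /=; lia.
  by rewrite z1 /=; lia.
have y_pos : 0 < y by move: notYy; rewrite negb_or; case/andP; lia.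
have y_ne1 : y != 1 :> nat by apply: contraNneq even_y => ->.
have odd_py : odd y.-1 by move: even_y; rewrite -(prednK y_pos) /= negbK.
have ltpk : y.-1 < k.+1 by lia.
apply: (force (inord y.-1)); first by rewrite inE inordK // odd_py; apply/orP; right; lia.
  by apply/cycle_relP; rewrite inordK //; lia.
move=> z /cycle_relP; rewrite inordK // => z_nbr /neq_val neq_zy.
by apply: (IHm z) => //; lia.
Qed.

Lemma path_rel_rev_ord w : {mono @rev_ord w : a b / path_rel a b}.
Proof.
move=> a b; have := ltn_ord a; have := ltn_ord b; rewrite /path_rel /= => lt_bw lt_aw.
by apply/idP/idP; lia.
Qed.

Lemma root1E w (x : 'I_w) i : x.+1 = i -> root1 w i = [set x].
Proof. by move=> <-; apply/setP => y; rewrite !inE eqSS. Qed.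

Lemma Z_hier_path_le n (T : finType) (eH : rel T) (U : {set 'I_n.+1}) :
  Z (hier_rel (@path_rel n.+1) U eH) <= #|T|.
Proof.
apply: (@leq_trans #|[set (ord0, y) | y : T]|); last exact: leq_imset_card.
apply/Z_le_card/zero_forcing_set_from_closed => C SC closedC [x y].
apply: (hier_path_sweep closedC (sigma := id) (Y := setT)) => //; first exact: inv_bij.
by move=> y' _; apply: (subsetP SC); apply: imset_f.
Qed.

Lemma endpoint_root_zero_forcing n k (sigma : 'I_n.+1 -> 'I_n.+1) :
  2 <= k -> bijective sigma -> {mono sigma : a b / path_rel a b} ->
  zero_forcing_set (hier_rel (@path_rel n.+1) [set sigma ord0] (@cycle_rel k.+1))
    [set (sigma ord_max, y) | y in alternate_vertices k].
Proof.
move=> le2k sigma_bij sigma_mono.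
apply: zero_forcing_set_from_closed => C SC closedC.
have fiber y : y \in alternate_vertices k -> forall x, (x, y) \in C.
  move=> Yy x.
  apply: (hier_path_sweep closedC (sigma := sigma \o @rev_ord n.+1) (Y := [set y])).
  - exact: bij_comp sigma_bij (inv_bij rev_ordK).
  - by move=> a b /=; rewrite sigma_mono path_rel_rev_ord.
  - move=> x' y1 y2 lt_x'n; rewrite inE => /eqP /(bij_inj sigma_bij) /(congr1 val) /=.
    by lia.
  - move=> y' /set1P ->; apply: (subsetP SC).
    rewrite /= (_ : rev_ord ord0 = ord_max); first exact: imset_f.
    by apply: val_inj => /=; lia.
  - exact: set11.
have root_layer y : (sigma ord0, y) \in C.
  suff: y \in [set z | (sigma ord0, z) \in C] by rewrite inE.
  apply: (alternate_vertices_force _ _ le2k).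
    by apply/subsetP => z Yz; rewrite inE; apply: fiber.
  move=> z z' Yz zz' others; rewrite inE.
  apply: (hier_root_force closedC _ _ _ (set11 _) (fiber z Yz) zz') => z'' zz'' ne.
  by have := others z'' zz'' ne; rewrite inE.
move=> [x y]; exact: (hier_path_sweep closedC (sigma := sigma) (Y := setT)).
Qed.

Lemma Z_endpoint_root_le n k (sigma : 'I_n.+1 -> 'I_n.+1) :
  2 <= k -> bijective sigma -> {mono sigma : a b / path_rel a b} ->
  Z (hier_rel (@path_rel n.+1) [set sigma ord0] (@cycle_rel k.+1)) <= k./2.+1.
Proof.
move=> le2k sigma_bij sigma_mono.
apply: (@leq_trans #|[set (sigma ord_max, y) | y in alternate_vertices k]|).
  exact/Z_le_card/endpoint_root_zero_forcing.
exact: leq_trans (leq_imset_card _ _) (card_alternate_vertices k).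
Qed.

Theorem mainTheorem8 (w h : nat) : 2 <= w -> 3 <= h ->
  (forall i : nat, (i == 1) || (i == w) ->
     Z (hier_rel (@path_rel w) (root1 w i) (@cycle_rel h)) <= h.+1./2) /\
  (forall i : nat, 1 < i < w ->
     Z (hier_rel (@path_rel w) (root1 w i) (@cycle_rel h)) <= h).
Proof.
case: w => [|n] // _; case: h => [|k] // le2k.
split=> i; last by move=> _; rewrite (leq_trans (Z_hier_path_le _ _ _ _)) ?card_ord.
case/orP=> /eqP ->.
  rewrite (@root1E _ ord0) //; apply: (Z_endpoint_root_le _ _ id) => //.
  exact: inv_bij.
rewrite (@root1E _ (rev_ord ord0)) /=; last by rewrite subn1.
apply: Z_endpoint_root_le => //; first exact: inv_bij rev_ordK.
exact: path_rel_rev_ord.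
Qed.
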